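(* Let $P$ be an optimal EBA decision protocol with respect to $\gamma_{\mathit{fip},n,t}$ and $\mathcal I=\mathcal I_{\gamma_{\mathit{fip},n,t},P}$. If for some agent $i$ and point $(r,m)$ we have $\mathcal I,(r,m)\models \mathit{decided}_i=\bot\wedge K_i\big(C_{\mathcal N}(\mathit{t\text{-}faulty}\wedge\mathit{no\text{-}decided}_{\mathcal N}(1)\wedge\exists 0)\big)$, then every agent $j\in\mathcal N(r)$ that has not decided by time $m$ decides in round $m+1$ of $r$. The same conclusion holds if instead $\mathcal I,(r,m)\models \mathit{decided}_i=\bot\wedge K_i\big(C_{\mathcal N}(\mathit{t\text{-}faulty}\wedge\mathit{no\text{-}decided}_{\mathcal N}(0)\wedge\exists 1)\big)$.
   Context: Agents and runs. There are $n$ agents $\mathit{Agt}=\{1,\ldots,n\}$; time is $m\in\mathbb N$, and round $m+1$ is the step from time $m$ to time $m+1$. A failure pattern is a pair $(\mathcal N,F)$ with $\mathcal N\subseteq\mathit{Agt}$ (the nonfaulty agents) and $F:\mathbb N\times\mathit{Agt}\times\mathit{Agt}\to\{0,1\}$, where $F(m,i,j)=0$ means the message from $i$ to $j$ in round $m+1$ is lost. The sending-omissions failure model $SO(t)$ ($t<n$) is the set of failure patterns with $|\mathit{Agt}\setminus\mathcal N|\le t$ such that $F(m,i,j)=0$ implies $i\notin\mathcal N$. An action protocol $P$ gives each agent $i$ a map $P_i$ from its local states to actions $\{\mathtt{decide}_i(0),\mathtt{decide}_i(1),\mathtt{noop}\}$; a run $r$ is determined by the initial states and failure pattern: at each time $k$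 each agent performs $P_i(r_i(k))$, sends its messages, lost messages are replaced by $\bot$, and local states are updated; $\mathcal N(r)$ is the nonfaulty set of $r$. Agent $i$ decides $v$ in round $k$ of $r$ if $P_i(r_i(k-1))=\mathtt{decide}_i(v)$. $\mathcal I,(r,m)\models K_i\varphi$ iff $\varphi$ holds at all points $(r',m')$ of $\mathcal I$ with $r'_i(m')=r_i(m)$; $\bigcirc\varphi$ holds at $(r,m)$ iff $\varphi$ holds at $(r,m+1)$; $\ominus\varphi$ holds at $(r,m)$ iff $m>0$ and $\varphi$ holds at $(r,m-1)$. Full-information context. $\gamma_{\mathit{fip},n,t}$ has $n$ agents and failure model $SO(t)$. Each agent's local state consists of its time $\mathit{time}_i$, its initial preference $\mathit{init}_i\in\{0,1\}$ (arbitrary), and the complete record of all messages it has received (with senders and rounds); it does not contain decision variables. In every round every agent sends its entire current local state to every agent, regardless of its action. Given an action protocol $P$, $\mathcal I_{\gamma_{\mathit{fip},n,t},P}$ is the interpreted system of all its runs, where $\mathit{decided}_i=v$ holds at $(r,m)$ iff $i$ decided $v$ in some round $\le m$ of $r$ ($\mathit{decided}_i=\bot$ if $i$ has not decided), $\mathit{init}_i=v$ is read from the local state, and $i\in\mathcal N$ holds iff $i\in\mathcal N(r)$. $\exists v$ abbreviates $\bigvee_j\mathit{init}_j=v$. $P$ is an EBA decision protocol for $\gamma_{\mathit{fip},n,t}$ if in every run: (Unique Decision) no agent decides $v$ and later $1-v$; (Agreement) no two nonfaulty agents decide different values; (Validity) if a nonfaulty agent decides $v$ then $\mathit{init}_j=v$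 for some $j$; (Termination) every nonfaulty agent eventually decides. Runs of $P$ and $P'$ correspond if they have the same initial global state. $P$ dominates $P'$ ($P'\le P$) if for all corresponding runs $r$ of $P$, $r'$ of $P'$, every $i\in\mathcal N(r)$ and time $m$: if $P_i(r_i(m))=\mathtt{decide}_i(v)$ then $P'_i(r'_i(m'))$ is not a decide action for any $m'<m$; $P$ strictly dominates $P'$ if $P'\le P$ and not $P\le P'$; an EBA decision protocol is optimal if no EBA decision protocol strictly dominates it. Common knowledge. $E_{\mathcal N}\varphi$ holds at $(r,m)$ iff $K_j\varphi$ holds at $(r,m)$ for every $j\in\mathcal N(r)$; $C_{\mathcal N}\varphi$ holds iff $E_{\mathcal N}^k\varphi$ holds for every $k\ge1$. $C_{\mathcal N}(\mathit{t\text{-}faulty}\wedge\varphi)$ abbreviates $\bigvee_{A\subseteq\mathit{Agt},\,|A|=t}C_{\mathcal N}\big(\bigwedge_{i\in A}\neg(i\in\mathcal N)\wedge\varphi\big)$, and $C_{\mathcal N}(\mathit{t\text{-}faulty})$ is the case $\varphi=\mathit{true}$. $\mathit{no\text{-}decided}_{\mathcal N}(x)$ abbreviates $\bigwedge_{j\in\mathcal N}\neg(\mathit{decided}_j=x)$. *)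

From mathcomp Require Import all_boot.
Set Implicit Arguments.
Unset Strict Implicit.
Unset Printing Implicit Defensive.

(* Agents are 'I_n.  Binary values: 0 is [false], 1 is [true]. *)

(* Full-information local states: the initial preference at time 0; at time
   m+1 the previous local state together with, for each sender j, the message
   received from j in round m+1 ([Some s] = j's local state at time m,
   [None] = bot, lost message).  The time is the depth of the state. *)
Inductive lstate (n : nat) : Type :=
| LInit : bool -> lstate n
| LStep : lstate n -> ('I_n -> option (lstate n)) -> lstate n.

(* Failure pattern (N, F); F m i j = false : message i -> j in round m+1 lost. *)
Record fpattern (n : nat) := FP {
  fp_N : {set 'I_n};
  fp_F : nat -> 'I_n -> 'I_n -> bool }.

Definition SO (n t : nat) (f : fpattern n) : Prop :=
  #|~: fp_N f| <= t /\
  forall m (i j : 'I_n), fp_F f m i j = false -> i \notin fp_N f.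

(* A run is determined by the initial preferences and the failure pattern. *)
Record run (n : nat) := Run {
  r_init : 'I_n -> bool;
  r_fp : fpattern n }.

Definition Nf n (r : run n) : {set 'I_n} := fp_N (r_fp r).

(* r_i(m): local state of agent i at time m in run r (independent of the
   action protocol in gamma_fip). *)
Fixpoint lst n (r : run n) (i : 'I_n) (m : nat) : lstate n :=
  match m with
  | 0 => LInit n (r_init r i)
  | m'.+1 => LStep (lst r i m')
               (fun j => if fp_F (r_fp r) m' j i then Some (lst r j m') else None)
  end.

Definition isrun n (t : nat) (r : run n) : Prop := SO t (r_fp r).

(* Action protocol: [P i s = Some v] is decide_i(v), [None] is noop. *)
Definition protocol (n : nat) := 'I_n -> lstate n -> option bool.

Definition decides_in n (P : protocol n) (r : run n) (i : 'I_n) (v : bool) (k : nat) :=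
  0 < k /\ P i (lst r i k.-1) = Some v.

Definition decided_by n (P : protocol n) (r : run n) (i : 'I_n) (v : bool) (m : nat) :=
  exists k, k <= m /\ decides_in P r i v k.

Definition undecided n (P : protocol n) (r : run n) (i : 'I_n) (m : nat) :=
  forall v, ~ decided_by P r i v m.

Definition formula (n : nat) := run n -> nat -> Prop.

Definition Knows n (t : nat) (i : 'I_n) (phi : formula n) : formula n :=
  fun r m => forall r' m', isrun t r' -> lst r' i m' = lst r i m -> phi r' m'.

Definition EN n (t : nat) (phi : formula n) : formula n :=
  fun r m => forall j, j \in Nf r -> Knows t j phi r m.

Fixpoint Eiter n (t : nat) (k : nat) (phi : formula n) : formula n :=
  match k with
  | 0 => phi
  | k'.+1 => EN t (Eiter t k' phi)
  end.

Definition CN n (t : nat) (phi : formula n) : formula n :=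
  fun r m => forall k, 0 < k -> Eiter t k phi r m.

Definition CN_tfaulty n (t : nat) (phi : formula n) : formula n :=
  fun r m => exists A : {set 'I_n}, #|A| = t /\
    CN t (fun r' m' => (forall i, i \in A -> i \notin Nf r') /\ phi r' m') r m.

Definition no_decided n (P : protocol n) (x : bool) : formula n :=
  fun r m => forall j, j \in Nf r -> ~ decided_by P r j x m.

Definition exists_init n (v : bool) : formula n :=
  fun r _ => exists j, r_init r j = v.

Definition EBA n (t : nat) (P : protocol n) : Prop :=
  forall r : run n, isrun t r ->
  [/\
      (forall i v k k', k < k' -> decides_in P r i v k -> ~ decides_in P r i (~~ v) k'),
      (forall i j v w k k', i \in Nf r -> j \in Nf r ->
         decides_in P r i v k -> decides_in P r j w k' -> v = w),
      (forall i v k, i \in Nf r -> decides_in P r i v k -> exists j, r_init r j = v) &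
      (forall i, i \in Nf r -> exists v k, decides_in P r i v k)].

(* [dominates t P P'] : P dominates P' (P' <= P).  Corresponding runs have the
   same initial global state (initial preferences and failure pattern), hence
   the same local states. *)
Definition dominates n (t : nat) (P P' : protocol n) : Prop :=
  forall r : run n, isrun t r -> forall i, i \in Nf r ->
  forall m v, P i (lst r i m) = Some v ->
  forall m', m' < m -> P' i (lst r i m') = None.

Definition strictly_dominates n (t : nat) (P P' : protocol n) : Prop :=
  dominates t P P' /\ ~ dominates t P' P.

Definition optimal n (t : nat) (P : protocol n) : Prop :=
  EBA t P /\ forall P', EBA t P' -> ~ strictly_dominates t P' P.

(* Let phi_b be C_N(t-faulty /\ no-decided_N(~b) /\ exists b).  The proof
   modifies P: an agent decides b as soon as it knows phi_b (preferring 0),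
   and otherwise follows P, performing only the first decision it proposes.
   Since phi_b is common knowledge among the nonfaulty agents, the nonfaulty
   agents know it at exactly the same points, so they fire the new rule
   simultaneously and with the same value; the conjunct no-decided_N(~b)
   makes it agree with the decisions P took earlier, and exists b gives
   validity.  Hence the modified protocol is an EBA protocol dominating P,
   so by optimality P dominates it.  At the given point (r,m) the fact phi_b
   holds, hence every nonfaulty undecided agent decides in the modified
   protocol by round m+1, and by domination it does so in P as well. *)

From Stdlib Require Import ClassicalEpsilon.
From mathcomp Require Import all_boot zify.

Set Implicit Arguments.
Unset Strict Implicit.
Unset Printing Implicit Defensive.

(* The classical truth value of a proposition, used to define protocols
   that act on what an agent knows. *)
Definition holds (p : Prop) : bool :=
  if excluded_middle_informative p then true else false.

Lemma holdsP (p : Prop) : reflect p (holds p).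
Proof. by rewrite /holds; case: excluded_middle_informative => h; constructor. Qed.

Lemma holds_iff (p q : Prop) : (p <-> q) -> holds p = holds q.
Proof. by move=> [pq qp]; apply/idP/idP => /holdsP h; apply/holdsP; auto. Qed.

Section FirstDecision.

Variables (n : nat) (Q : protocol n).

(* [fired j s]: Q proposes a decision at some strict predecessor of the
   local state s (local states record their whole history). *)
Fixpoint fired (j : 'I_n) (s : lstate n) : bool :=
  match s with
  | LInit _ => false
  | LStep s' _ => isSome (Q j s') || fired j s'
  end.

Definition first_decision : protocol n :=
  fun j s => if fired j s then None else Q j s.

Lemma fired_lst r j m :
  fired j (lst r j m) = false <-> forall m', m' < m -> Q j (lst r j m') = None.
Proof.
elim: m => [|m [IH1 IH2]] /=; first by [].
split.
  move=> /norP[Qm /negbTE /IH1 prev] m'.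
  rewrite ltnS leq_eqVlt => /orP[/eqP-> | /prev //].
  by case: (Q j (lst r j m)) Qm.
move=> prev; apply/norP; split; first by rewrite prev.
by rewrite IH2 // => m' lt; apply: prev; apply: ltnW.
Qed.

Lemma first_decisionP r j v k :
  decides_in first_decision r j v k <->
  [/\ 0 < k, forall m', m' < k.-1 -> Q j (lst r j m') = None
           & Q j (lst r j k.-1) = Some v].
Proof.
rewrite /decides_in /first_decision; split.
  by case=> k0; case F: fired => // Qv; split=> //; apply/fired_lst.
by case=> k0 /fired_lst -> Qv.
Qed.

Lemma first_decision_earliest r j v k m :
  decides_in first_decision r j v k -> Q j (lst r j m) <> None -> k.-1 <= m.
Proof.
case/first_decisionP=> _ prev _ Qm; rewrite leqNgt; apply/negP => /prev.
exact: Qm.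
Qed.

Lemma first_decision_once r j v w k k' :
  decides_in first_decision r j v k -> decides_in first_decision r j w k' ->
  k = k'.
Proof.
move=> dk dk'; have /first_decisionP[k0 _ Qk] := dk.
have /first_decisionP[k'0 _ Qk'] := dk'.
have : k.-1 <= k'.-1 by apply: (first_decision_earliest dk); rewrite Qk'.
have : k'.-1 <= k.-1 by apply: (first_decision_earliest dk'); rewrite Qk.
lia.
Qed.

Lemma first_decision_exists r j M :
  Q j (lst r j M) <> None ->
  exists v m0, m0 <= M /\ decides_in first_decision r j v m0.+1.
Proof.
move=> QM; have ex : exists m, isSome (Q j (lst r j m)).
  by exists M; case: (Q j _) QM.
case: (ex_minnP ex) => m0 + minimal; case Qm0: (Q j _) => [v|] // _.
exists v, m0; split; first by apply: minimal; case: (Q j _) QM.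
apply/first_decisionP; split=> // m' lt; case Qm': (Q j _) => [w|] //.
by have := minimal m'; rewrite Qm' leqNgt lt => /(_ isT).
Qed.

Lemma first_decision_dominates t (P : protocol n) :
  (forall j s, Q j s = None -> P j s = None) -> dominates t first_decision P.
Proof.
move=> QP r _ i _ m v dm m' lt.
have /first_decisionP[_ prev _] : decides_in first_decision r i v m.+1 by [].
exact/QP/prev.
Qed.

End FirstDecision.

Section Preemption.

Variables (n t : nat) (P T : protocol n).

Definition preempt : protocol n :=
  fun j s => if T j s is Some b then Some b else P j s.

Definition early : protocol n := first_decision preempt.

Lemma early_decides_by r j M :
  T j (lst r j M) <> None \/ P j (lst r j M) <> None ->
  exists v m0, m0 <= M /\ decides_in early r j v m0.+1.
Proof.
move=> proposal; apply: first_decision_exists; rewrite /preempt.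
by case: (T j _) proposal => [b|] [].
Qed.

Lemma early_cases r j v k :
  decides_in early r j v k ->
  T j (lst r j k.-1) = Some v \/
  (P j (lst r j k.-1) = Some v /\ forall m', m' <= k.-1 -> T j (lst r j m') = None).
Proof.
case/first_decisionP=> _ prev; rewrite /preempt.
case Tk: (T j _) => [b|] Pk; [by left | right; split=> // m'].
rewrite leq_eqVlt => /orP[/eqP-> // | /prev].
by rewrite /preempt; case: (T j _).
Qed.

Lemma early_dominates : dominates t early P.
Proof. by apply: first_decision_dominates => j s; rewrite /preempt; case: (T j s). Qed.

Hypothesis T_public : forall r m i j, isrun t r -> i \in Nf r -> j \in Nf r ->
  T i (lst r i m) = T j (lst r j m).
Hypothesis T_safe : forall r m j b, isrun t r -> j \in Nf r ->
  T j (lst r j m) = Some b -> no_decided P (~~ b) r m /\ exists_init b r m.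

Lemma preempt_agrees r i j a b v w :
  isrun t r -> i \in Nf r -> j \in Nf r ->
  T i (lst r i a) = Some v -> P j (lst r j b) = Some w ->
  (forall m', m' <= b -> T j (lst r j m') = None) -> w = v.
Proof.
move=> Hr Hi Hj Tia Pjb silent.
have ba : b < a.
  by rewrite ltnNge; apply/negP => /silent; rewrite -(T_public _ Hr Hi Hj) Tia.
have decided_w : decided_by P r j w a by exists b.+1.
have [no_opposite _] := T_safe Hr Hi Tia.
by case: v w {Tia Pjb} no_opposite decided_w => [] [] // /(_ j Hj).
Qed.

Hypothesis P_EBA : EBA t P.

Lemma early_EBA : EBA t early.
Proof.
move=> r Hr; have [_ P_agree P_valid P_term] := P_EBA Hr; split.
- move=> i v k k' lt dk dk'.
  by move: lt; rewrite (first_decision_once dk dk') ltnn.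
- move=> i j v w k k' Hi Hj dk dk'.
  case: (early_cases dk) => [Tv | [Pv Ti]]; case: (early_cases dk') => [Tw | [Pw Tj]].
  + have public := T_public _ Hr Hi Hj.
    have pre_i : preempt i (lst r i k'.-1) <> None by rewrite /preempt public Tw.
    have pre_j : preempt j (lst r j k.-1) <> None by rewrite /preempt -public Tv.
    have /eqP same : k.-1 == k'.-1.
      by rewrite eqn_leq (first_decision_earliest dk pre_i) (first_decision_earliest dk' pre_j).
    by move: Tw; rewrite -same -public Tv => -[].
  + by rewrite (preempt_agrees Hr Hi Hj Tv Pw Tj).
  + by rewrite (preempt_agrees Hr Hj Hi Tw Pv Ti).
  + exact: P_agree Hi Hj (conj (proj1 dk) Pv) (conj (proj1 dk') Pw).
- move=> i v k Hi dk; case: (early_cases dk) => [Tv | [Pv _]].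
    exact: (T_safe Hr Hi Tv).2.
  exact: P_valid Hi (conj (proj1 dk) Pv).
- move=> i Hi; have [v [k [k0 Pk]]] := P_term i Hi.
  have proposal : T i (lst r i k.-1) <> None \/ P i (lst r i k.-1) <> None.
    by right; rewrite Pk.
  have [w [m0 [_ dm0]]] := early_decides_by proposal.
  by exists w, m0.+1.
Qed.

End Preemption.

Section KnowledgeTrigger.

Variables (n t : nat) (phi : bool -> formula n).

Definition knows_state (j : 'I_n) (psi : formula n) (s : lstate n) : Prop :=
  forall r' m', isrun t r' -> lst r' j m' = s -> psi r' m'.

Definition knowledge_trigger : protocol n := fun j s =>
  if holds (knows_state j (phi false) s) then Some false
  else if holds (knows_state j (phi true) s) then Some true else None.

Definition fact_trigger (r : run n) (m : nat) : option bool :=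
  if holds (phi false r m) then Some false
  else if holds (phi true r m) then Some true else None.

Lemma fact_trigger_sound r m b : fact_trigger r m = Some b -> phi b r m.
Proof.
rewrite /fact_trigger; case: (holdsP (phi false r m)) => [? [<-] // | _].
by case: (holdsP (phi true r m)) => // ? [<-].
Qed.

Lemma fact_trigger_complete r m :
  phi false r m \/ phi true r m -> fact_trigger r m <> None.
Proof.
rewrite /fact_trigger; case: (holdsP (phi false r m)) => // ?.
by case: (holdsP (phi true r m)) => // ? [].
Qed.

Hypothesis phi_known : forall b r m j, isrun t r -> j \in Nf r ->
  phi b r m -> Knows t j (phi b) r m.

Lemma knowledge_trigger_run r m j : isrun t r -> j \in Nf r ->
  knowledge_trigger j (lst r j m) = fact_trigger r m.
Proof.
move=> Hr Hj.
have known b : knows_state j (phi b) (lst r j m) <-> phi b r m.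
  by split; [move/(_ r m Hr erefl) | apply: phi_known].
by rewrite /knowledge_trigger (holds_iff (known false)) (holds_iff (known true)).
Qed.

End KnowledgeTrigger.

Lemma CN_tfaulty_known n t (psi : formula n) r m j :
  j \in Nf r -> CN_tfaulty t psi r m -> Knows t j (CN_tfaulty t psi) r m.
Proof.
move=> Hj [A [cardA common]] r' m' Hr' same; exists A; split=> // k _.
exact: (common k.+1 isT j Hj r' m' Hr' same).
Qed.

Lemma CN_tfaulty_holds n t (psi : formula n) r m j :
  isrun t r -> j \in Nf r -> CN_tfaulty t psi r m -> psi r m.
Proof. by move=> Hr Hj [A [_ common]]; have [] := common 1 isT j Hj r m Hr erefl. Qed.

Section DecisionKnowledge.

Variables (n t : nat) (P : protocol n).

Definition decision_ck (b : bool) : formula n :=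
  CN_tfaulty t (fun r m => no_decided P (~~ b) r m /\ exists_init b r m).

Definition ck_trigger : protocol n := knowledge_trigger t decision_ck.

Lemma decision_ck_known b r m j :
  isrun t r -> j \in Nf r -> decision_ck b r m -> Knows t j (decision_ck b) r m.
Proof. by move=> _; apply: CN_tfaulty_known. Qed.

Lemma ck_trigger_run r m j : isrun t r -> j \in Nf r ->
  ck_trigger j (lst r j m) = fact_trigger decision_ck r m.
Proof. exact: knowledge_trigger_run decision_ck_known r m j. Qed.

Lemma ck_trigger_public r m i j : isrun t r -> i \in Nf r -> j \in Nf r ->
  ck_trigger i (lst r i m) = ck_trigger j (lst r j m).
Proof. by move=> Hr Hi Hj; rewrite !ck_trigger_run. Qed.

Lemma ck_trigger_safe r m j b : isrun t r -> j \in Nf r ->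
  ck_trigger j (lst r j m) = Some b -> no_decided P (~~ b) r m /\ exists_init b r m.
Proof.
move=> Hr Hj; rewrite ck_trigger_run // => /fact_trigger_sound ck.
exact: CN_tfaulty_holds Hr Hj ck.
Qed.

End DecisionKnowledge.

Lemma optimal_dominates n t (P P' : protocol n) :
  optimal t P -> EBA t P' -> dominates t P' P -> dominates t P P'.
Proof.
move=> [_ opt] EBA' dom'; case: (holdsP (dominates t P P')) => // not_dom.
by case: (opt P' EBA').
Qed.

Lemma dominating_decides_next n t (P P' : protocol n) r j m m0 v v' k :
  dominates t P P' -> isrun t r -> j \in Nf r -> undecided P r j m ->
  decides_in P r j v k -> m0 <= m -> decides_in P' r j v' m0.+1 -> k = m.+1.
Proof.
move=> dom Hr Hj undec [k0 Pk] le [_ P'm0].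
have later : m < k by rewrite ltnNge; apply/negP => km; apply: (undec v); exists k.
apply/eqP; rewrite eqn_leq later andbT leqNgt; apply/negP => too_late.
have silent : P' j (lst r j m0) = None by apply: (dom r Hr j Hj k.-1 v Pk); lia.
by rewrite silent in P'm0.
Qed.

Theorem mainTheorem7 (n t : nat) (P : protocol n) :
  t < n -> optimal t P ->
  forall (i : 'I_n) (r : run n) (m : nat), isrun t r ->
  ((undecided P r i m /\
    Knows t i (CN_tfaulty t (fun r' m' => no_decided P true r' m' /\
                                          exists_init false r' m')) r m)
   \/
   (undecided P r i m /\
    Knows t i (CN_tfaulty t (fun r' m' => no_decided P false r' m' /\
                                          exists_init true r' m')) r m)) ->
  forall j, j \in Nf r -> undecided P r j m ->
  exists v, decides_in P r j v m.+1.
Proof.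
move=> _ optP i r m Hr known j Hj undec.
have P_EBA : EBA t P := proj1 optP.
have ck : decision_ck t P false r m \/ decision_ck t P true r m.
  by case: known => -[_ K]; [left | right]; exact: K r m Hr erefl.
have fires : ck_trigger t P j (lst r j m) <> None.
  by rewrite ck_trigger_run //; apply: fact_trigger_complete.
have [v' [m0 [le dm0]]] := early_decides_by (P := P) (or_introl fires).
have early_ok : EBA t (early P (ck_trigger t P)).
  exact: early_EBA (@ck_trigger_public n t P) (@ck_trigger_safe n t P) P_EBA.
have dom := optimal_dominates optP early_ok (@early_dominates n t P (ck_trigger t P)).
have [_ _ _ P_term] := P_EBA r Hr; have [v [k dk]] := P_term j Hj.
exists v; rewrite -(dominating_decides_next dom Hr Hj undec dk le dm0).
exact: dk.
Qed.
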